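(* Let $k:\mathcal X\times\mathcal X\to\mathbb R$ be a positive-definite kernel with RKHS $(\mathcal F_k,\langle\cdot,\cdot\rangle_k)$, let $x_1,\dots,x_N\in\mathcal X$ be distinct, $\mathbf z_N\in\mathbb R^N$, and $\nu>0$, $s\in\mathbb N$. Let $\mathbf K_N=[k(x_i,x_j)]_{i,j}$, $\mathbf k_N(x)=[k(x,x_i)]_i$, $\Sigma_N=\mathbf K_N(e^{\nu s\mathbf K_N}-I)^{-1}$, and $$\hat\pi_N(x)=\mathbf k_N(x)^\top(\mathbf K_N+\Sigma_N)^{-1}\mathbf z_N,\quad x\in\mathcal X$$ (the NTK-regime gradient-descent predictor after $s$ steps with learning rate $\nu$ and zero initialization). Define $\Phi_N:\mathbb R^N\to\mathcal F_k$, $\Phi_N\mathbf a=\sum_i a_ik(\cdot,x_i)$, with adjoint $\Phi_N^*\pi=(\pi(x_i))_{i=1}^N$, and the positive self-adjoint operator $R_N=\Phi_N(e^{\nu s\mathbf K_N}-I)^{-1}\Phi_N^*$ on $\mathcal F_k$. Then $\hat\pi_N\in\mathcal F_k$ and $$\hat\pi_N\in\operatorname*{argmin}_{\pi\in\mathcal F_k}\;\sum_{i=1}^N(\pi(x_i)-z_i)^2+\langle\pi,R_N\pi\rangle_k.$$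
   Context: The paper writes the regularizer as $\|R_N^{1/2}\pi\|_k^2=\langle\pi,R_N\pi\rangle_k$. (The paper's displayed statement has a sign typo in the exponent of $R_N$; the version above is the one consistent with $\Sigma_N$ and the proof.) *)

From HB Require Import structures.
From mathcomp Require Import all_boot all_order all_algebra.
From mathcomp Require Import all_classical all_reals all_analysis.
Set Implicit Arguments. Unset Strict Implicit. Unset Printing Implicit Defensive.
Import Order.TTheory GRing.Theory Num.Theory.
Import numFieldNormedType.Exports.
Local Open Scope classical_set_scope.
Local Open Scope ring_scope.

Definition expmx (R : realType) (n : nat) (A : 'M[R]_n) : 'M[R]_n :=
  lim ((fun m : nat => \sum_(j < m) (j`!%:R)^-1 *: (A ^+ j)) @ \oo).

Definition pd_kernel (R : realType) (X : Type) (k : X -> X -> R) : Prop :=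
  (forall x y, k x y = k y x) /\
  (forall (n : nat) (p : 'I_n -> X), injective p ->
     forall a : 'cV[R]_n, a != 0 ->
       0 < \sum_(i < n) \sum_(j < n) a i 0 * a j 0 * k (p i) (p j)).

(* (F, ip) is the RKHS of k: a real Hilbert space of functions X -> R
   (F the set of its elements, ip its inner product) with reproducing kernel k. *)
Record IsRKHS (R : realType) (X : Type) (k : X -> X -> R)
    (F : set (X -> R)) (ip : (X -> R) -> (X -> R) -> R) : Prop := {
  rkhs_zero : F (fun _ => 0);
  rkhs_lin : forall (a : R) f g, F f -> F g -> F (fun x => a * f x + g x);
  rkhs_ip_sym : forall f g, F f -> F g -> ip f g = ip g f;
  rkhs_ip_linl : forall (a : R) f g h, F f -> F g -> F h ->
      ip (fun x => a * f x + g x) h = a * ip f h + ip g h;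
  rkhs_ip_pos : forall f, F f -> (exists x, f x != 0) -> 0 < ip f f;
  rkhs_kernel : forall x, F (fun y => k y x);
  rkhs_reproducing : forall f x, F f -> ip f (fun y => k y x) = f x;
  rkhs_complete : forall u : nat -> X -> R, (forall n, F (u n)) ->
      (forall e : R, 0 < e -> exists N, forall m n, (N <= m)%N -> (N <= n)%N ->
          ip (fun x => u m x - u n x) (fun x => u m x - u n x) < e) ->
      exists f, F f /\ forall e : R, 0 < e -> exists N, forall n, (N <= n)%N ->
          ip (fun x => u n x - f x) (fun x => u n x - f x) < e
}.

Section Defs.
Variables (R : realType) (X : Type) (k : X -> X -> R) (N : nat) (xs : 'I_N -> X).

Definition gramK : 'M[R]_N := \matrix_(i, j) k (xs i) (xs j).
Definition kvec (x : X) : 'cV[R]_N := \col_i k x (xs i).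
Definition expdiff (nu : R) (s : nat) : 'M[R]_N :=
  expmx ((nu * s%:R) *: gramK) - 1%:M.
Definition SigmaN (nu : R) (s : nat) : 'M[R]_N := gramK *m invmx (expdiff nu s).
Definition pihat (nu : R) (s : nat) (z : 'cV[R]_N) (x : X) : R :=
  ((kvec x)^T *m invmx (gramK + SigmaN nu s) *m z) 0 0.
Definition PhiN (a : 'cV[R]_N) : X -> R := fun y => \sum_(i < N) a i 0 * k y (xs i).
Definition PhiNstar (f : X -> R) : 'cV[R]_N := \col_i f (xs i).
Definition RN (nu : R) (s : nat) (f : X -> R) : X -> R :=
  PhiN (invmx (expdiff nu s) *m PhiNstar f).
Definition objective (ip : (X -> R) -> (X -> R) -> R) (nu : R) (s : nat)
    (z : 'cV[R]_N) (f : X -> R) : R :=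
  \sum_(i < N) (f (xs i) - z i 0) ^+ 2 + ip f (RN nu s f).
End Defs.

(* Write b := Phi_N^* pi for the values of pi at the data.  By the reproducing
   property <pi, R_N pi> = b^T M b with M := (e^{nu s K_N} - I)^-1, so the
   objective depends on pi only through b and equals |b - z|^2 + b^T M b.
   From e^{nu s K_N} - I >= nu s K_N > 0 (in the Loewner order), M is symmetric,
   positive semidefinite and commutes with K_N; the quadratic is therefore
   minimised by any b with (I + M) b = z, and since
   hat pi_N = Phi_N (K_N (I + M))^-1 z, its values b = K_N (K_N (I + M))^-1 z
   at the data satisfy exactly this normal equation. *)

From HB Require Import structures.
From mathcomp Require Import all_boot all_order all_algebra.
From mathcomp Require Import all_classical all_reals all_analysis.
From mathcomp Require Import ring lra.
Set Implicit Arguments. Unset Strict Implicit. Unset Printing Implicit Defensive.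
Import Order.TTheory GRing.Theory Num.Theory.
Import numFieldNormedType.Exports.
Local Open Scope classical_set_scope.
Local Open Scope ring_scope.

(* Makes the complete normed-module structure of matrices canonical, as needed by [normed_cvg]. *)
HB.instance Definition _ (R : realType) (m n : nat) := NormedModule.on 'M[R]_(m, n).

Section MatrixNorm.
Variables (R : realType) (n : nat).
Implicit Types (A B C : 'M[R]_n).

Lemma ler_mx_norm_coef (M : 'M[R]_n) i j : `|M i j| <= `|M|.
Proof.
by rewrite [leRHS]/Num.Def.normr /= mx_normrE; apply/bigmax_geP; right; exists (i, j).
Qed.

Lemma mx_norm_le (M : 'M[R]_n) e : 0 <= e -> (forall i j, `|M i j| <= e) -> `|M| <= e.
Proof.
move=> e_ge0 Me; rewrite [leLHS]/Num.Def.normr /= mx_normrE.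
by apply: bigmax_le => // -[i j] _; apply: Me.
Qed.

Lemma ler_mx_normM B C : `|B *m C| <= n%:R * `|B| * `|C|.
Proof.
apply: mx_norm_le => [|i j]; first by rewrite !mulr_ge0.
have -> : n%:R * `|B| * `|C| = \sum_(l < n) `|B| * `|C|.
  by rewrite sumr_const card_ord -mulrA mulr_natl.
rewrite mxE; apply: le_trans (ler_norm_sum _ _ _) (ler_sum _ _) => l _.
by rewrite normrM ler_pM ?ler_mx_norm_coef.
Qed.

Lemma ler_mx_norm1 : `|1%:M : 'M[R]_n| <= 1.
Proof. by apply: mx_norm_le => // i j; rewrite !mxE; case: eqP; rewrite ?normr1 ?normr0. Qed.

Lemma ler_mx_normX A j : `|A ^+ j| <= (n%:R * `|A|) ^+ j.
Proof.
elim: j => [|j IHj]; first by rewrite !expr0 ler_mx_norm1.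
rewrite exprSr -mulmxE exprSr; apply: le_trans (ler_mx_normM _ _) _.
by rewrite [leRHS]mulrC mulrAC ler_wpM2l // mulr_ge0.
Qed.

End MatrixNorm.

Definition expmx_psum (R : realType) (n : nat) (A : 'M[R]_n) (m : nat) : 'M[R]_n :=
  \sum_(j < m) (j`!%:R)^-1 *: A ^+ j.

Lemma cvg_expmx (R : realType) (n : nat) (A : 'M[R]_n) :
  expmx_psum A m @[m --> \oo] --> expmx A.
Proof.
(* Dominated by the scalar exponential series of n |A|. *)
suff : cvgn (series (fun j => (j`!%:R)^-1 *: A ^+ j)).
  by rewrite (_ : series _ = expmx_psum A) // funeqE => m; rewrite /series /= big_mkord.
apply: normed_cvg; apply: (series_le_cvg _ _ _ (is_cvg_series_exp_coeff (n%:R * `|A|))).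
- by move=> j /=.
- by move=> j; rewrite exp_coeff_ge0 // mulr_ge0.
- move=> j /=; rewrite normrZ exp_coeffE ger0_norm ?invr_ge0 //.
  by rewrite ler_wpM2l ?invr_ge0 ?ler_mx_normX.
Qed.

Section LinearFunctional.
Variables (R : realType) (m n : nat) (phi : 'M[R]_(m, n) -> R).
Hypothesis phi_lin : forall a A B, phi (a *: A + B) = a * phi A + phi B.

Lemma linear_mx_delta M : phi M = \sum_i \sum_j M i j * phi (delta_mx i j).
Proof.
have phi0 : phi 0 = 0 by have := phi_lin (-1) 0 0; rewrite scaler0 addr0 mulN1r addNr.
have phiD A B : phi (A + B) = phi A + phi B by rewrite -{1}[A]scale1r phi_lin mul1r.
have phi_sum (I : Type) (r : seq I) (F : I -> 'M[R]_(m, n)) :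
    phi (\sum_(i <- r) F i) = \sum_(i <- r) phi (F i).
  elim: r => [|a r IHr]; first by rewrite !big_nil phi0.
  by rewrite !big_cons phiD IHr.
rewrite {1}(matrix_sum_delta M) phi_sum; apply: eq_bigr => i _.
by rewrite phi_sum; apply: eq_bigr => j _; rewrite -[_ *: _]addr0 phi_lin phi0 addr0.
Qed.

Lemma continuous_linear_mx : continuous phi.
Proof.
move=> M; rewrite (funext linear_mx_delta) /=.
apply: cvg_big => [||i _]; [exact: add_continuous | exact: nbhs_filter |].
apply: cvg_big => [||j _]; [exact: add_continuous | exact: nbhs_filter |].
by apply: cvgMr_tmp; [exact: nbhs_filter | exact: coord_continuous].
Qed.

Lemma cvg_linear_mx (u : nat -> 'M[R]_(m, n)) L :
  u @ \oo --> L -> phi (u p) @[p --> \oo] --> phi L.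
Proof. exact: continuous_cvg _ (@continuous_linear_mx L). Qed.

Lemma ler_lim_linear_mx (u : nat -> 'M[R]_(m, n)) L a :
  u @ \oo --> L -> (\forall p \near \oo, a <= phi (u p)) -> a <= phi L.
Proof.
move=> /cvg_linear_mx phi_uL ge_a.
exact: (closed_cvg _ (@closed_ge _ a) ge_a _ phi_uL).
Qed.

Lemma lim_linear_mx_eq0 (u : nat -> 'M[R]_(m, n)) L :
  u @ \oo --> L -> (forall p, phi (u p) = 0) -> phi L = 0.
Proof.
move=> /cvg_linear_mx phi_uL phi_u0.
have near_u0 : \forall p \near \oo, phi (u p) = 0 by exact: nearW.
exact: (closed_cvg _ (@closed_eq _ 0) near_u0 _ phi_uL).
Qed.

End LinearFunctional.

Lemma comm_mx_invmx (R : comUnitRingType) (n : nat) (A B : 'M[R]_n) :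
  B \in unitmx -> comm_mx A B -> comm_mx A (invmx B).
Proof.
move=> B_unit AB; rewrite /comm_mx.
have -> : invmx B *m A = invmx B *m (A *m B) *m invmx B by rewrite mulmxA mulmxK.
by rewrite AB mulmxA mulVmx // mul1mx.
Qed.

Section QuadraticForm.
Variables (R : realFieldType) (n : nat).
Implicit Types (B C : 'M[R]_n) (u v : 'cV[R]_n).

Definition qf B v : R := (v^T *m B *m v) 0 0.
Definition psdmx B : Prop := forall v, 0 <= qf B v.
Definition pdmx B : Prop := forall v, v != 0 -> 0 < qf B v.

Lemma qfD B C v : qf (B + C) v = qf B v + qf C v.
Proof. by rewrite /qf mulmxDr mulmxDl mxE. Qed.

Lemma qfZ a B v : qf (a *: B) v = a * qf B v.
Proof. by rewrite /qf -scalemxAr -scalemxAl mxE. Qed.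

Lemma qfB B C v : qf (B - C) v = qf B v - qf C v.
Proof. by rewrite qfD -scaleN1r qfZ mulN1r. Qed.

Lemma qf_sum (I : Type) (r : seq I) (F : I -> 'M[R]_n) v :
  qf (\sum_(i <- r) F i) v = \sum_(i <- r) qf (F i) v.
Proof.
elim: r => [|a r IHr]; last by rewrite !big_cons qfD IHr.
by rewrite !big_nil /qf mulmx0 mul0mx mxE.
Qed.

Lemma qfv0 B : qf B 0 = 0.
Proof. by rewrite /qf mulmx0 mxE. Qed.

Lemma qf1 v : qf 1%:M v = \sum_i v i 0 ^+ 2.
Proof. by rewrite /qf mulmx1 mxE; apply: eq_bigr => i _; rewrite mxE expr2. Qed.

Lemma qf_mulmx B C v : qf (C^T *m B *m C) v = qf B (C *m v).
Proof. by rewrite /qf trmx_mul !mulmxA. Qed.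

Lemma pdmx_psd B : pdmx B -> psdmx B.
Proof. by move=> B_pd v; case: (eqVneq v 0) => [->|/B_pd/ltW //]; rewrite qfv0. Qed.

Lemma pdmx1 : pdmx 1%:M.
Proof.
move=> v v_neq0; rewrite qf1 lt_def sumr_ge0 ?andbT => [|i _]; last exact: sqr_ge0.
apply: contra v_neq0; rewrite psumr_eq0 => [/allP v0|i _]; last exact: sqr_ge0.
apply/eqP/matrixP => i j; rewrite (ord1 j) mxE.
by apply/eqP; move: (v0 i (mem_index_enum i)); rewrite sqrf_eq0.
Qed.

Lemma pdmxD B C : pdmx B -> psdmx C -> pdmx (B + C).
Proof. by move=> B_pd C_psd v /B_pd qfB_gt0; rewrite qfD ltr_wpDr. Qed.

Lemma pdmx_unit B : pdmx B -> B \in unitmx.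
Proof.
move=> B_pd; rewrite unitmxE unitfE; apply/negP => /det0P [v v_neq0 vB0].
have : v^T != 0 by rewrite -trmx0 (inj_eq trmx_inj).
by move/B_pd; rewrite /qf trmxK vB0 mul0mx mxE ltxx.
Qed.

Lemma psdmxX B j : B^T = B -> psdmx B -> psdmx (B ^+ j).
Proof.
move=> B_sym B_psd; suff : psdmx (B ^+ j) /\ psdmx (B ^+ j.+1) by case.
elim: j => [|j [IHj IHj1]]; first by rewrite expr0 expr1; split=> //; apply/pdmx_psd/pdmx1.
split=> // v; rewrite exprS exprSr -!mulmxE -{1}B_sym mulmxA qf_mulmx.
exact: IHj.
Qed.

Lemma psdmx_invmx B : B^T = B -> B \in unitmx -> psdmx B -> psdmx (invmx B).
Proof.
move=> B_sym B_unit B_psd v; have := B_psd (invmx B *m v).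
by rewrite -qf_mulmx trmx_inv B_sym mulVmx ?mul1mx.
Qed.

Lemma qf_addv B u w : B^T = B ->
  qf B (u + w) = qf B u + qf B w + 2 * (u^T *m B *m w) 0 0.
Proof.
move=> B_sym; rewrite /qf [(u + w)^T]raddfD /= !mulmxDl !mulmxDr.
have -> : w^T *m B *m u = (u^T *m B *m w)^T by rewrite !trmx_mul trmxK B_sym mulmxA.
by rewrite !mxE; ring.
Qed.

End QuadraticForm.

Section MatrixExponential.
Variables (R : realType) (n : nat) (A : 'M[R]_n).
Hypothesis A_sym : A^T = A.

Lemma trmxX_sym j : (A ^+ j)^T = A ^+ j.
Proof.
elim: j => [|j IHj]; first by rewrite expr0 trmx1.
by rewrite exprS -mulmxE trmx_mul IHj A_sym mulmxE -exprSr exprS.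
Qed.

Lemma trmx_expmx_psum m : (expmx_psum A m)^T = expmx_psum A m.
Proof.
by rewrite /expmx_psum raddf_sum; apply: eq_bigr => j _ /=; rewrite linearZ /= trmxX_sym.
Qed.

Lemma trmx_expmx : (expmx A)^T = expmx A.
Proof.
apply/matrixP => i j; rewrite mxE; apply/eqP; rewrite -subr_eq0; apply/eqP.
apply: (lim_linear_mx_eq0 (phi := fun M => M j i - M i j) _ (@cvg_expmx _ _ A)).
  by move=> a M1 M2; rewrite !mxE; ring.
by move=> m; rewrite -[in X in X - _]trmx_expmx_psum mxE subrr.
Qed.

Lemma comm_mx_expmx B : comm_mx B A -> comm_mx B (expmx A).
Proof.
move=> BA; suff BS m : comm_mx B (expmx_psum A m).
  apply/matrixP => i j; apply/eqP; rewrite -subr_eq0; apply/eqP.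
  apply: (lim_linear_mx_eq0 (phi := fun M => (B *m M) i j - (M *m B) i j) _
                            (@cvg_expmx _ _ A)).
    by move=> a M1 M2; rewrite mulmxDr mulmxDl -scalemxAr -scalemxAl !mxE; ring.
  by move=> m; rewrite BS subrr.
apply: comm_mx_sum => j _; rewrite /comm_mx -scalemxAr -scalemxAl; congr (_ *: _).
by move: BA; rewrite comm_mxE; exact: commrX.
Qed.

Lemma qf_expmx_ge v : psdmx A -> qf 1%:M v + qf A v <= qf (expmx A) v.
Proof.
move=> A_psd.
apply: (ler_lim_linear_mx (phi := fun M : 'M[R]_n => qf M v) _ (@cvg_expmx _ _ A)).
  by move=> a M1 M2; rewrite qfD qfZ.
exists 2%N => // -[|[|m]] // _; rewrite /expmx_psum !big_ord_recl !qfD /= expr0 expr1.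
rewrite !invr1 !scale1r addrA lerDl qf_sum sumr_ge0 // => j _.
by rewrite qfZ mulr_ge0 ?invr_ge0 ?psdmxX.
Qed.

End MatrixExponential.

Section KernelCombinations.
Variables (R : realType) (X : Type) (k : X -> X -> R).
Variables (F : set (X -> R)) (ip : (X -> R) -> (X -> R) -> R).
Hypothesis k_rkhs : IsRKHS k F ip.

Lemma rkhs_ip0l h : F h -> ip (fun=> 0) h = 0.
Proof.
move=> Fh; have := rkhs_ip_linl k_rkhs (-1) (rkhs_zero k_rkhs) (rkhs_zero k_rkhs) Fh.
by rewrite (_ : (fun=> _) = fun=> 0) ?mulN1r ?addNr // funeqE => x; rewrite mulr0 addr0.
Qed.

Lemma rkhs_kernel_comb (I : Type) (r : seq I) (c : I -> R) (p : I -> X) :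
  F (fun y => \sum_(i <- r) c i * k y (p i)) /\
  forall h, F h -> ip (fun y => \sum_(i <- r) c i * k y (p i)) h = \sum_(i <- r) c i * h (p i).
Proof.
elim: r => [|a r [IHF IHip]].
  rewrite (_ : (fun y => _) = fun=> 0); last by rewrite funeqE => y; rewrite big_nil.
  by split=> [|h Fh]; [exact: rkhs_zero k_rkhs | rewrite big_nil rkhs_ip0l].
set g := fun y => \sum_(i <- r) c i * k y (p i).
have ka_in := rkhs_kernel k_rkhs (p a).
rewrite (_ : (fun y => \sum_(i <- a :: r) c i * k y (p i)) =
             fun y => c a * (fun y => k y (p a)) y + g y); last first.
  by rewrite funeqE => y; rewrite big_cons.
split=> [|h Fh]; first exact: rkhs_lin k_rkhs _ _ _ ka_in IHF.
rewrite (rkhs_ip_linl k_rkhs) // big_cons IHip // (rkhs_ip_sym k_rkhs) //.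
by rewrite (rkhs_reproducing k_rkhs).
Qed.

Variables (N : nat) (xs : 'I_N -> X).

Lemma PhiN_in a : F (PhiN k xs a).
Proof. exact: (rkhs_kernel_comb _ (fun i => a i 0) xs).1. Qed.

Lemma rkhs_ip_PhiN f a : F f -> ip f (PhiN k xs a) = ((PhiNstar xs f)^T *m a) 0 0.
Proof.
move=> Ff; rewrite (rkhs_ip_sym k_rkhs) //; last exact: PhiN_in.
rewrite (rkhs_kernel_comb _ (fun i => a i 0) xs).2 // mxE.
by apply: eq_bigr => i _; rewrite !mxE mulrC.
Qed.

End KernelCombinations.

Section PenalizedLeastSquares.
Variables (R : realFieldType) (n : nat).

Definition penalized_lsq (M : 'M[R]_n) (z b : 'cV[R]_n) : R := qf 1%:M (b - z) + qf M b.

(* Completing the square: for z = (I + M) b0 the cross terms cancel and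
   penalized_lsq M z (b0 + d) = penalized_lsq M z b0 + |d|^2 + d^T M d. *)
Lemma penalized_lsq_min (M : 'M[R]_n) (z b0 b : 'cV[R]_n) :
  M^T = M -> psdmx M -> z = b0 + M *m b0 ->
  penalized_lsq M z b0 <= penalized_lsq M z b.
Proof.
move=> M_sym M_psd ->; rewrite /penalized_lsq -(subrK b0 b); set d := b - b0; clearbody d.
have -> : d + b0 - (b0 + M *m b0) = - (M *m b0) + d by rewrite opprD addrA addrK addrC.
have -> : b0 - (b0 + M *m b0) = - (M *m b0) by rewrite opprD addrA subrr sub0r.
rewrite (addrC d) !qf_addv ?trmx1 //.
have -> : ((- (M *m b0))^T *m 1%:M *m d) 0 0 = - (b0^T *m M *m d) 0 0.
  by rewrite mulmx1 [(- _)^T]raddfN /= trmx_mul M_sym mulNmx mxE.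
have := pdmx_psd (@pdmx1 _ _) d; have := M_psd d; lra.
Qed.

End PenalizedLeastSquares.

Section GradientDescentPredictor.
Variables (R : realType) (X : Type) (k : X -> X -> R) (N : nat) (xs : 'I_N -> X).

Lemma PhiNstar_PhiN a : PhiNstar xs (PhiN k xs a) = gramK k xs *m a.
Proof.
apply/matrixP => i j; rewrite (ord1 j) !mxE.
by apply: eq_bigr => l _; rewrite !mxE mulrC.
Qed.

Lemma pihatE nu s z :
  pihat k xs nu s z = PhiN k xs (invmx (gramK k xs + SigmaN k xs nu s) *m z).
Proof.
rewrite funeqE => x; rewrite /pihat -mulmxA mxE.
by apply: eq_bigr => i _; rewrite !mxE mulrC.
Qed.

Lemma objectiveE F ip nu s z f : IsRKHS k F ip -> F f ->
  objective k xs ip nu s z f =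
  penalized_lsq (invmx (expdiff k xs nu s)) z (PhiNstar xs f).
Proof.
move=> k_rkhs Ff; rewrite /objective /RN (rkhs_ip_PhiN k_rkhs) // /penalized_lsq qf1.
congr (_ + _); first by apply: eq_bigr => i _; rewrite !mxE.
by rewrite /qf mulmxA.
Qed.

Hypothesis k_pd : pd_kernel k.
Hypothesis xs_inj : injective xs.

Lemma gramK_sym : (gramK k xs)^T = gramK k xs.
Proof. by apply/matrixP => i j; rewrite !mxE k_pd.1. Qed.

Lemma gramK_pd : pdmx (gramK k xs).
Proof.
move=> v v_neq0.
suff -> : qf (gramK k xs) v = \sum_i \sum_j v i 0 * v j 0 * k (xs i) (xs j).
  exact: k_pd.2.
rewrite /qf mxE; under eq_bigr do rewrite mxE mulr_suml.
rewrite exchange_big; apply: eq_bigr => i _; apply: eq_bigr => j _.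
by rewrite !mxE; ring.
Qed.

Variables (nu : R) (s : nat).
Hypotheses (nu_gt0 : 0 < nu) (s_gt0 : (0 < s)%N).

Let c := nu * s%:R.

Lemma scaled_gramK_sym : (c *: gramK k xs)^T = c *: gramK k xs.
Proof. by rewrite linearZ /= gramK_sym. Qed.

Lemma expdiff_sym : (expdiff k xs nu s)^T = expdiff k xs nu s.
Proof. by rewrite /expdiff [(_ - _)^T]raddfB /= trmx_expmx ?trmx1 // scaled_gramK_sym. Qed.

Lemma comm_mx_gramK_expdiff : comm_mx (gramK k xs) (expdiff k xs nu s).
Proof.
apply: comm_mxB (comm_mx1 _); apply: comm_mx_expmx.
by rewrite /comm_mx -scalemxAr -scalemxAl.
Qed.

Lemma expdiff_pd : pdmx (expdiff k xs nu s).
Proof.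
have c_gt0 : 0 < c by rewrite mulr_gt0 ?ltr0n.
have A_psd : psdmx (c *: gramK k xs).
  by move=> v; rewrite qfZ mulr_ge0 ?(ltW c_gt0) ?(pdmx_psd gramK_pd).
move=> v v_neq0; rewrite /expdiff qfB subr_gt0.
apply: lt_le_trans (qf_expmx_ge scaled_gramK_sym v A_psd).
by rewrite ltrDl qfZ mulr_gt0 ?gramK_pd.
Qed.

Lemma invmx_expdiff_sym : (invmx (expdiff k xs nu s))^T = invmx (expdiff k xs nu s).
Proof. by rewrite trmx_inv expdiff_sym. Qed.

Lemma invmx_expdiff_psd : psdmx (invmx (expdiff k xs nu s)).
Proof.
exact: psdmx_invmx expdiff_sym (pdmx_unit expdiff_pd) (pdmx_psd expdiff_pd).
Qed.

Lemma pihat_normal_eq z :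
  z = PhiNstar xs (pihat k xs nu s z) +
      invmx (expdiff k xs nu s) *m PhiNstar xs (pihat k xs nu s z).
Proof.
set K := gramK k xs; set M := invmx (expdiff k xs nu s).
have E_unit := pdmx_unit expdiff_pd.
have P_unit : 1%:M + M \in unitmx by apply/pdmx_unit/pdmxD/invmx_expdiff_psd/pdmx1.
have KP : comm_mx K (1%:M + M).
  exact: comm_mxD (comm_mx1 K) (comm_mx_invmx E_unit comm_mx_gramK_expdiff).
rewrite pihatE PhiNstar_PhiN -/K.
have -> : K + SigmaN k xs nu s = K *m (1%:M + M) by rewrite mulmxDr mulmx1.
set b := K *m _; rewrite -{1}[b]mul1mx -mulmxDl mulmxA -KP mulKVmx //.
by rewrite unitmx_mul P_unit andbT; apply: pdmx_unit gramK_pd.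
Qed.

End GradientDescentPredictor.

Theorem mainTheorem8 (R : realType) (X : Type) (k : X -> X -> R)
  (F : set (X -> R)) (ip : (X -> R) -> (X -> R) -> R)
  (N : nat) (xs : 'I_N -> X) (z : 'cV[R]_N) (nu : R) (s : nat) :
  pd_kernel k -> IsRKHS k F ip -> injective xs -> 0 < nu -> (0 < s)%N ->
  F (pihat k xs nu s z) /\
  forall f, F f -> objective k xs ip nu s z (pihat k xs nu s z) <= objective k xs ip nu s z f.
Proof.
move=> k_pd k_rkhs xs_inj nu_gt0 s_gt0.
have pihat_in : F (pihat k xs nu s z) by rewrite pihatE; apply: (PhiN_in k_rkhs xs).
split=> // f Ff; rewrite !(objectiveE _ _ _ _ k_rkhs) //.
apply: penalized_lsq_min (pihat_normal_eq k_pd xs_inj nu_gt0 s_gt0 z).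
  exact: invmx_expdiff_sym xs k_pd nu s.
exact: (invmx_expdiff_psd k_pd xs_inj nu_gt0 s_gt0).
Qed.
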